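(* Let $A$ be a T-brace and let $a\in\zeta_2(\star,A)$ be an element of finite order in $(A,+)$. Suppose that the torsion subgroup of the additive group of $\zeta(\star,A)$ is a $p$-group for some prime $p$. If the additive group of $\zeta_2(\star,A)$ is not periodic, then the additive order of $a\star a$ is at most $p$ (i.e. $p(a\star a)=0$).
   Context: A (left) brace is a set $A$ with two operations $+$ and $\cdot$ such that $(A,+)$ is an abelian group, $(A,\cdot)$ is a group, and $a(b+c)=ab+ac-a$ for all $a,b,c\in A$. Put $a\star b=ab-a-b$. A subbrace is a subset which is a subgroup of both $(A,+)$ and $(A,\cdot)$; a subbrace $L$ is an ideal if $a\star z, z\star a\in L$ for all $a\in A$, $z\in L$, and then the quotient brace $A/L$ is defined. $A$ is a T-brace if whenever $I$ is an ideal of $J$ and $J$ is an ideal of $A$, then $I$ is an ideal of $A$. The $\star$-center is $\zeta(\star,A)=\{a: a\star x=x\star a=0\ \forall x\}$; $\zeta_2(\star,A)$ is given by $\zeta_2(\star,A)/\zeta(\star,A)=\zeta(\star,A/\zeta(\star,A))$. *)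

From HB Require Import structures.
From mathcomp Require Import all_boot all_algebra.
Set Implicit Arguments. Unset Strict Implicit. Unset Printing Implicit Defensive.
Import GRing.Theory.
Local Open Scope ring_scope.

Record brace (V : zmodType) := Brace {
  bmul : V -> V -> V;
  bone : V;
  binv : V -> V;
  bmulA : forall a b c, bmul a (bmul b c) = bmul (bmul a b) c;
  bmul1 : forall a, bmul bone a = a;
  bmulV : forall a, bmul (binv a) a = bone;
  bmulD : forall a b c, bmul a (b + c) = bmul a b + bmul a c - a
}.

Section BraceDefs.
Variables (V : zmodType) (B : brace V).

Definition star (a b : V) : V := bmul B a b - a - b.

Definition subbrace (L : V -> Prop) : Prop :=
  [/\ L 0, (forall x y, L x -> L y -> L (x - y)),
      L (bone B), (forall x y, L x -> L y -> L (bmul B x y))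
    & (forall x, L x -> L (binv B x))].

Definition ideal_in (J I : V -> Prop) : Prop :=
  [/\ subbrace I, (forall z, I z -> J z)
    & (forall a z, J a -> I z -> I (star a z) /\ I (star z a))].

Definition ideal (I : V -> Prop) : Prop := ideal_in (fun _ => True) I.

Definition T_brace : Prop :=
  forall I J : V -> Prop, ideal J -> ideal_in J I -> ideal I.

Definition zeta (a : V) : Prop := forall x, star a x = 0 /\ star x a = 0.

(* second star-center: a + zeta lies in the star-center of A/zeta, i.e.
   (a+zeta)*(x+zeta) = a*x + zeta and x*a + zeta are trivial in A/zeta. *)
Definition zeta2 (a : V) : Prop := forall x, zeta (star a x) /\ zeta (star x a).

Definition add_finite_order (a : V) : Prop := exists n : nat, (0 < n)%N /\ a *+ n = 0.

End BraceDefs.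

(* Elements of zeta_2 act additively on the left, so star is biadditive on zeta_2.
   Choose w in zeta_2 of infinite additive order with w*a = a*w = w*w = 0 (a
   multiple of a non-torsion element b of zeta_2, or b*b itself), and put
   d = pa + w.  Then J = zeta + Zd is an ideal of A and I = Zd + Z(d*d) is an
   ideal of J, so in a T-brace I is an ideal of A.  Hence y := d*a = p(a*a) lies
   in I: y = kd + jpy, because d*d = py.  Multiplying by the additive order n of
   a kills everything except knw, so k = 0 and y = pjy; since y is a torsion
   element of zeta it is killed by a power of p, hence y = 0. *)

From HB Require Import structures.
From Stdlib Require Import Classical.
From mathcomp Require Import all_boot all_algebra.
Import GRing.Theory.
Set Implicit Arguments.
Unset Strict Implicit.
Unset Printing Implicit Defensive.
Local Open Scope ring_scope.

Section AddSubgroup.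
Variable V : zmodType.

Definition add_subgroup (P : V -> Prop) : Prop :=
  P 0 /\ forall x y, P x -> P y -> P (x - y).

Variables (P : V -> Prop) (subP : add_subgroup P).

Lemma add_subgroupN x : P x -> P (- x).
Proof. by case: subP => P0 PB Px; rewrite -sub0r; apply: PB. Qed.

Lemma add_subgroupD x y : P x -> P y -> P (x + y).
Proof.
by case: subP => _ PB Px Py; rewrite -[y]opprK; apply/PB/add_subgroupN.
Qed.

Lemma add_subgroupMn x n : P x -> P (x *+ n).
Proof.
case: subP => P0 _ Px; elim: n => [|n IHn]; first by rewrite mulr0n.
by rewrite mulrS; apply: add_subgroupD.
Qed.

Lemma add_subgroupMz x k : P x -> P (x *~ k).
Proof.
by move=> Px; case: k => n; rewrite ?NegzE ?mulrNz; do ?apply: add_subgroupN;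
  apply: add_subgroupMn.
Qed.

End AddSubgroup.

Lemma torsion_add_subgroup (V : zmodType) n :
  add_subgroup (fun u : V => u *+ n = 0).
Proof. by split=> [|x y xn yn]; rewrite ?mul0rn // mulrnBl xn yn subrr. Qed.

Lemma mulrz_nontorsion_eq0 (V : zmodType) (w : V) k n :
  ~ add_finite_order w -> (0 < n)%N -> (w *~ k) *+ n = 0 -> k = 0.
Proof.
move=> w_inf n_gt0; have w_free m : w *+ (m.+1 * n) != 0.
  by apply/eqP=> wmn; apply: w_inf; exists (m.+1 * n)%N; rewrite muln_gt0 n_gt0.
case: k => [[|m]|m] //; rewrite ?NegzE ?mulrNz ?mulNrn -?pmulrn -mulrnA => /eqP.
  by rewrite (negbTE (w_free m)).
by rewrite oppr_eq0 (negbTE (w_free m)).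
Qed.

Lemma cyclic_coeff_nontorsion_eq0 (V : zmodType) (c w y : V) k j n :
  ~ add_finite_order w -> (0 < n)%N -> c *+ n = 0 -> y *+ n = 0 ->
  y = (c + w) *~ k + y *~ j -> k = 0.
Proof.
move=> w_inf n_gt0 cn yn ykj; apply: (mulrz_nontorsion_eq0 w_inf n_gt0).
have -> : w *~ k = (y - y *~ j) - c *~ k by rewrite {1}ykj addrK mulrzDl addrC addKr.
have Tn := torsion_add_subgroup V n.
by apply: Tn.2; [apply: Tn.2 => // | ]; apply: (add_subgroupMz Tn).
Qed.

Lemma pmultiple_fixed_torsion_eq0 (V : zmodType) (y : V) (p s : nat) (j : int) :
  y = y *~ (p%:Z * j) -> y *+ p ^ s = 0 -> y = 0.
Proof.
move=> y_fixed ys; have y_fixedX t : y = y *~ ((p%:Z * j) ^+ t).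
  elim: t => [|t IHt]; first by rewrite expr0 mulr1z.
  by rewrite exprSr mulrzA -IHt -y_fixed.
by rewrite (y_fixedX s) exprMn mulrzA -natz -natrX mulrz_nat ys mul0rz.
Qed.

Definition multiples (V : zmodType) (e y : V) : Prop := exists j : int, y = e *~ j.

Definition cyclic_plus (V : zmodType) (P : V -> Prop) (d y : V) : Prop :=
  exists k : int, P (y - d *~ k).

Section CyclicPlus.
Variables (V : zmodType) (P : V -> Prop) (d : V).

Lemma multiples_add_subgroup (e : V) : add_subgroup (multiples e).
Proof.
split; first by exists 0; rewrite mulr0z.
by move=> _ _ [i ->] [j ->]; exists (i - j); rewrite mulrzBr.
Qed.

Lemma cyclic_plusW x : P x -> cyclic_plus P d x.
Proof. by exists 0; rewrite mulr0z subr0. Qed.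

Lemma cyclic_plus_gen : add_subgroup P -> cyclic_plus P d d.
Proof. by case=> P0 _; exists 1; rewrite mulr1z subrr. Qed.

Lemma cyclic_plusS (Q : V -> Prop) :
  (forall x, P x -> Q x) -> forall x, cyclic_plus P d x -> cyclic_plus Q d x.
Proof. by move=> PQ x [k Pk]; exists k; apply: PQ. Qed.

Lemma cyclic_plus_add_subgroup :
  add_subgroup P -> add_subgroup (cyclic_plus P d).
Proof.
move=> [P0 PB]; split; first exact: cyclic_plusW.
move=> x y [i Pi] [j Pj]; exists (i - j).
have -> : x - y - d *~ (i - j) = (x - d *~ i) - (y - d *~ j).
  by rewrite mulrzBr !opprB addrACA [RHS]addrACA [- y + _]addrC.
exact: PB.
Qed.

Lemma cyclic_plus_sub (Q : V -> Prop) : add_subgroup Q ->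
  (forall x, P x -> Q x) -> Q d -> forall x, cyclic_plus P d x -> Q x.
Proof.
move=> subQ PQ Qd x [k /PQ Qx]; rewrite -(subrK (d *~ k) x).
exact/(add_subgroupD subQ)/(add_subgroupMz subQ).
Qed.

End CyclicPlus.

Lemma starDr (V : zmodType) (B : brace V) a x y :
  star B a (x + y) = star B a x + star B a y.
Proof. by rewrite /star bmulD addrACA -opprD addrACA addrA. Qed.

Lemma star_zmod_morphism (V : zmodType) (B : brace V) a : zmod_morphism (star B a).
Proof. by move=> x y; apply: (addIr (star B a y)); rewrite -starDr !subrK. Qed.

HB.instance Definition _ (V : zmodType) (B : brace V) (a : V) :=
  GRing.isZmodMorphism.Build V V (star B a) (star_zmod_morphism B a).

Section Brace.
Variables (V : zmodType) (B : brace V).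
Local Notation "x · y" := (bmul B x y) (at level 40, left associativity).
Local Notation "x ⋆ y" := (star B x y) (at level 40, left associativity).

Lemma star0r a : a ⋆ 0 = 0.
Proof. exact: raddf0. Qed.

Lemma starBr a x y : a ⋆ (x - y) = a ⋆ x - a ⋆ y.
Proof. exact: raddfB. Qed.

Lemma starMnr a x n : a ⋆ (x *+ n) = (a ⋆ x) *+ n.
Proof. exact: raddfMn. Qed.

Lemma starMzr a x k : a ⋆ (x *~ k) = (a ⋆ x) *~ k.
Proof. exact: raddfMz. Qed.

Lemma bmulr0 a : a · 0 = a.
Proof.
have := bmulD B a 0 0.
by rewrite addr0 -addrA -{1}[a · 0]addr0 => /addrI /esym /subr0_eq.
Qed.

Lemma bone_eq0 : bone B = 0.
Proof. by rewrite -[LHS]bmulr0 bmul1. Qed.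

Lemma bmul0r x : 0 · x = x.
Proof. by rewrite -bone_eq0 bmul1. Qed.

Lemma bmulE u v : u · v = u ⋆ v + u + v.
Proof. by rewrite /star (addrAC (u · v - u)) !subrK. Qed.

Lemma star0l x : 0 ⋆ x = 0.
Proof. by rewrite /star bmul0r subr0 subrr. Qed.

Lemma star_bmull u v x : (u · v) ⋆ x = u ⋆ (v ⋆ x) + v ⋆ x + u ⋆ x.
Proof.
rewrite {1}/star -bmulA (bmulE v x); move: (v ⋆ x) => s.
rewrite bmulE !starDr (bmulE u v).
move: (u ⋆ s) (u ⋆ v) (u ⋆ x) => us uv ux.
(* regroup as (us + s + ux) + (uv + u + v) - (uv + u + v) + (x - x) *)
rewrite !addrA (ACl (((1*5*3)*(2*4*6)*8)*(7*9))%AC) /=.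
by rewrite addrK subrr addr0.
Qed.

Local Notation Z := (zeta B).
Local Notation Z2 := (zeta2 B).

Lemma zeta0 : Z 0.
Proof. by move=> x; rewrite star0l star0r. Qed.

Lemma zeta_zeta2 z : Z z -> Z2 z.
Proof. by move=> Zz x; have [-> ->] := Zz x; split; apply: zeta0. Qed.

Lemma star_subl_zeta w s x : Z s -> (w - s) ⋆ x = w ⋆ x.
Proof.
move=> Zs; have ws : w = (w - s) · s by rewrite bmulE (Zs _).2 add0r subrK.
by rewrite [in RHS]ws star_bmull (Zs x).1 star0r !add0r.
Qed.

Lemma starDl u v x : Z2 v -> (u + v) ⋆ x = u ⋆ x + v ⋆ x.
Proof.
move=> Z2v; have Zuv : Z (u ⋆ v) := (Z2v u).2.
have -> : u + v = u · v - u ⋆ v.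
  by rewrite bmulE; move: (u ⋆ v) => uv; rewrite -[uv + u + v]addrA [RHS]addrC addKr.
by rewrite star_subl_zeta // star_bmull ((Z2v x).1 u).2 add0r addrC.
Qed.

Lemma starNl v x : Z2 v -> (- v) ⋆ x = - (v ⋆ x).
Proof.
move=> Z2v; have := starDl (- v) x Z2v.
by rewrite addNr star0l => /esym/addr0_eq <-; rewrite opprK.
Qed.

Lemma starBl u v x : Z2 v -> (u - v) ⋆ x = u ⋆ x - v ⋆ x.
Proof. by move=> Z2v; rewrite -[in u ⋆ x](subrK v u) starDl // addrK. Qed.

Lemma zeta_add_subgroup : add_subgroup Z.
Proof.
split; first exact: zeta0.
move=> z1 z2 Zz1 Zz2 x; have [z1x xz1] := Zz1 x; have [z2x xz2] := Zz2 x.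
by rewrite starBl ?starBr ?z1x ?z2x ?xz1 ?xz2 ?subrr //; apply: zeta_zeta2.
Qed.

Lemma zeta2_add_subgroup : add_subgroup Z2.
Proof.
split; first exact/zeta_zeta2/zeta0.
move=> u v Z2u Z2v x; rewrite starBl // starBr.
by split; apply: zeta_add_subgroup.2; [apply: (Z2u x).1 | apply: (Z2v x).1
                                      | apply: (Z2u x).2 | apply: (Z2v x).2].
Qed.

Lemma starMnl v n x : Z2 v -> (v *+ n) ⋆ x = (v ⋆ x) *+ n.
Proof.
move=> Z2v; elim: n => [|n IHn]; first by rewrite !mulr0n star0l.
by rewrite !mulrSr starDl // IHn.
Qed.

Lemma starMzl v k x : Z2 v -> (v *~ k) ⋆ x = (v ⋆ x) *~ k.
Proof.
by move=> Z2v; case: k => n; rewrite ?NegzE ?mulrNz ?starNl ?starMnl //;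
  apply: add_subgroupMn zeta2_add_subgroup _ _ Z2v.
Qed.

Lemma binv_zeta2 x : Z2 x -> binv B x = x ⋆ x - x.
Proof.
move=> Z2x; have Zxx : Z (x ⋆ x) := (Z2x x).1.
have := star_bmull (binv B x) x x.
rewrite bmulV bone_eq0 star0l (Zxx _).2 add0r => /esym/addr0_eq xV.
have := bmulV B x; rewrite bmulE bone_eq0 -xV addrAC => /addr0_eq <-.
by rewrite opprD opprK.
Qed.

Lemma subbrace_zeta2 (H : V -> Prop) : add_subgroup H ->
  (forall x, H x -> Z2 x) -> (forall x y, H x -> H y -> H (x ⋆ y)) ->
  subbrace B H.
Proof.
move=> subH HZ2 Hstar; have [H0 HB] := subH.
split=> //; first by rewrite bone_eq0.
  move=> x y Hx Hy; rewrite bmulE.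
  by do 2!apply: (add_subgroupD subH) => //; apply: Hstar.
by move=> x Hx; rewrite binv_zeta2; [apply: HB => //; apply: Hstar | apply: HZ2].
Qed.

Lemma ideal_zeta_zeta2 (H : V -> Prop) : add_subgroup H ->
  (forall x, Z x -> H x) -> (forall x, H x -> Z2 x) -> ideal B H.
Proof.
move=> subH ZH HZ2; split=> //.
  by apply: subbrace_zeta2 => // x y _ Hy; apply/ZH/(HZ2 y Hy x).2.
by move=> x z _ Hz; have [? ?] := HZ2 z Hz x; split; apply: ZH.
Qed.

Section CyclicExtension.
Variables (d : V) (Z2d : Z2 d).

Local Notation J := (cyclic_plus Z d).
Local Notation I := (cyclic_plus (multiples (d ⋆ d)) d).

Lemma star_cyclic_plusl x k y : Z (x - d *~ k) -> x ⋆ y = (d ⋆ y) *~ k.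
Proof.
move=> Zx; rewrite -(subrK (d *~ k) x) starDl ?(Zx y).1 ?add0r ?starMzl //.
exact: add_subgroupMz zeta2_add_subgroup _ _ Z2d.
Qed.

Lemma star_cyclic_plusr x y k : Z (y - d *~ k) -> x ⋆ y = (x ⋆ d) *~ k.
Proof. by move=> Zy; rewrite -(subrK (d *~ k) y) starDr (Zy x).2 add0r starMzr. Qed.

Lemma star_cyclic_plus x y : J x -> J y -> multiples (d ⋆ d) (x ⋆ y).
Proof.
move=> [k Zx] [l Zy]; exists (l * k).
by rewrite (star_cyclic_plusl _ Zx) (star_cyclic_plusr _ Zy) mulrzA.
Qed.

Lemma cyclic_plus_zeta2 x : J x -> Z2 x.
Proof. exact: cyclic_plus_sub zeta2_add_subgroup zeta_zeta2 Z2d x. Qed.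

Lemma multiples_zeta x : multiples (d ⋆ d) x -> Z x.
Proof. by move=> [j ->]; apply: add_subgroupMz zeta_add_subgroup _ _ (Z2d d).1. Qed.

Lemma ideal_cyclic_plus_zeta : ideal B J.
Proof.
apply: ideal_zeta_zeta2 cyclic_plus_zeta2.
  exact: cyclic_plus_add_subgroup zeta_add_subgroup.
exact: cyclic_plusW.
Qed.

Lemma ideal_in_cyclic_plus_multiples : ideal_in B J I.
Proof.
have IJ x : I x -> J x by apply: cyclic_plusS; apply: multiples_zeta.
have subI := cyclic_plus_add_subgroup d (multiples_add_subgroup (d ⋆ d)).
split=> //.
  apply: subbrace_zeta2 => // [x /IJ /cyclic_plus_zeta2 //|x y Ix Iy].
  by apply/cyclic_plusW/star_cyclic_plus; apply: IJ.
by move=> x z Jx /IJ Jz; split; apply/cyclic_plusW/star_cyclic_plus.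
Qed.

Lemma T_brace_star_zeta2 x : T_brace B ->
  exists k j : int, d ⋆ x = d *~ k + (d ⋆ d) *~ j.
Proof.
move=> TB; have [_ _ Istar] :=
  TB _ _ ideal_cyclic_plus_zeta ideal_in_cyclic_plus_multiples.
have Id : I d := cyclic_plus_gen _ (multiples_add_subgroup _).
have [_ [k [j dxkj]]] := Istar x d Logic.I Id.
by exists k, j; rewrite -dxkj subrKC.
Qed.

End CyclicExtension.

Lemma zeta2_nontorsion_annihilator a n b :
  Z2 a -> a *+ n = 0 -> (0 < n)%N -> Z2 b -> ~ add_finite_order b ->
  exists w, [/\ Z2 w, ~ add_finite_order w, w ⋆ a = 0, a ⋆ w = 0 & w ⋆ w = 0].
Proof.
move=> Z2a na0 n_gt0 Z2b b_inf; have Zbb : Z (b ⋆ b) := (Z2b b).1.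
case: (classic (add_finite_order (b ⋆ b))) => [[t [t_gt0 bbt]] | bb_inf]; last first.
  exists (b ⋆ b); have [? ?] := Zbb a.
  by split=> //; [apply: zeta_zeta2 | apply: (Zbb _).1].
exists (b *+ (n * t)); split.
- exact: add_subgroupMn zeta2_add_subgroup _ _ Z2b.
- move=> [q [q_gt0 bq]]; apply: b_inf; exists (n * t * q)%N.
  by rewrite !muln_gt0 n_gt0 t_gt0 q_gt0 mulrnA.
- by rewrite starMnl // mulrnA -starMnr na0 star0r mul0rn.
- by rewrite starMnr mulrnA -starMnl // na0 star0l mul0rn.
- by rewrite starMnl // starMnr mulnC !mulrnA bbt !mul0rn.
Qed.

End Brace.

Theorem corollary4p6 (V : zmodType) (B : brace V) (p : nat) (a : V) :
  prime p ->
  T_brace B ->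
  zeta2 B a ->
  add_finite_order a ->
  (* torsion part of the additive group of zeta is a p-group *)
  (forall z, zeta B z -> add_finite_order z -> exists k : nat, z *+ (p ^ k) = 0) ->
  (* additive group of zeta_2 is not periodic *)
  ~ (forall z, zeta2 B z -> add_finite_order z) ->
  (star B a a) *+ p = 0.
Proof.
move=> _ TB Z2a [n [n_gt0 na0]] p_torsion not_periodic.
have [b b_nonperiodic] := not_all_ex_not _ _ not_periodic.
have [Z2b b_inf] := imply_to_and _ _ b_nonperiodic.
have [w [Z2w w_inf wa aw ww]] :=
  zeta2_nontorsion_annihilator Z2a na0 n_gt0 Z2b b_inf.
have Z2ap : zeta2 B (a *+ p) := add_subgroupMn (zeta2_add_subgroup B) _ Z2a.
set y := star B a a *+ p; set d := a *+ p + w.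
have Z2d : zeta2 B d := add_subgroupD (zeta2_add_subgroup B) Z2ap Z2w.
have da : star B d a = y by rewrite starDl // wa addr0 starMnl.
have dd : star B d d = y *+ p.
  by rewrite starDl // starMnl // !starDr aw ww !starMnr wa mul0rn !addr0.
have [k [j]] := T_brace_star_zeta2 Z2d a TB.
rewrite da dd pmulrn -mulrzA => ykj.
have apn : a *+ p *+ n = 0 by rewrite mulrnAC na0 mul0rn.
have yn : y *+ n = 0 by rewrite mulrnAC -starMnr na0 star0r mul0rn.
have k0 := cyclic_coeff_nontorsion_eq0 w_inf n_gt0 apn yn ykj.
have Zy : zeta B y := add_subgroupMn (zeta_add_subgroup B) _ (Z2a a).1.
have [s ys] := p_torsion y Zy (ex_intro _ n (conj n_gt0 yn)).
by apply: (pmultiple_fixed_torsion_eq0 _ ys); rewrite {1}ykj k0 mulr0z add0r.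
Qed.
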